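(* Let $T, N, s, \delta$ be positive integers and $\beta$ a nonnegative integer. Let $x_1,\dots,x_T$ be nonnegative integers, where $x_t$ is the number of shifts starting at time step $t$, every shift started at time $t$ occupying the time steps $t, t+1, \dots, t+\delta-1$. Set $x_\tau := 0$ for $\tau \le 0$ and, for $t\in\{1,\dots,T\}$, define $$z_t := \sum_{\tau=t-\delta-\beta+1}^{t} x_\tau .$$ Suppose that $$\sum_{t=1}^T x_t = sN \qquad\text{and}\qquad z_t \le N \ \text{ for all } t\in\{1,\dots,T\}.$$ Then the $sN$ shifts can be assigned to $N$ drivers such that each driver works exactly $s$ shifts (each of $\delta$ time steps), and each driver has a break of at least $\beta$ time steps between any two consecutive shifts assigned to that driver; i.e., if a driver is assigned shifts starting at times $t_1 < t_2$, then $t_2 \ge t_1 + \delta + \beta$.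
   Context: Time is discretized into steps $1,\dots,T$. A shift starting at time $t$ is active during time steps $t,\dots,t+\delta-1$. The ''extended shift'' of a shift starting at $t_1$ is the interval $[t_1, t_1+\delta+\beta)$, i.e. the shift together with the mandatory break of $\beta$ time steps after it; a driver has adequate breaks exactly when the extended shifts assigned to that driver are pairwise disjoint. *)

From mathcomp Require Import all_boot.
Set Implicit Arguments. Unset Strict Implicit. Unset Printing Implicit Defensive.

(* z_t = sum_{tau = t - delta - beta + 1}^{t} x_tau, with x_tau := 0 for tau <= 0.
   Lower bound truncated at 0 (nat), and tau = 0 excluded by the filter 0 < tau. *)
Definition zsum (x : nat -> nat) (delta beta t : nat) : nat :=
  \sum_(t.+1 - (delta + beta) <= tau < t.+1 | 0 < tau) x tau.

(* An assignment: f d k = start time of the k-th shift (k < s) of driver d (d < N). *)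

Definition realizes (T N s : nat) (x : nat -> nat) (f : 'I_N -> 'I_s -> nat) : Prop :=
  (forall d k, 1 <= f d k <= T) /\
  (forall t, 1 <= t <= T ->
     #|[set p : 'I_N * 'I_s | f p.1 p.2 == t]| = x t).

Definition adequate_breaks (N s delta beta : nat) (f : 'I_N -> 'I_s -> nat) : Prop :=
  forall d (k1 k2 : 'I_s), k1 != k2 ->
    (f d k1 + delta + beta <= f d k2) || (f d k2 + delta + beta <= f d k1).

(* List the sN shifts by nondecreasing start time, numbering them 0, ..., sN - 1, and give
   shift number kN + d to driver d as its k-th shift. Two shifts of one driver, starting at
   t1 <= t2, are at least N apart in this numbering, so at least N + 1 shifts start in
   [t1, t2]. If t2 < t1 + delta + beta, all of them lie in the window summed by z_(t2),
   contradicting z_(t2) <= N. *)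

From mathcomp Require Import all_boot.
From mathcomp Require Import zify.

Set Implicit Arguments.
Unset Strict Implicit.
Unset Printing Implicit Defensive.

Lemma count_range_iota lo hi M :
  count (fun i => lo <= i < hi) (iota 0 M) = minn hi M - lo.
Proof.
elim: M => [|M IHM]; first by rewrite minn0.
rewrite -addn1 iotaD count_cat IHM /= add0n.
by case: (leqP lo M) => ?; case: (ltnP M hi) => ? /=; lia.
Qed.

Lemma card_ord_pair_index (N s : nat) (P : pred nat) :
  #|[set p : 'I_N * 'I_s | P (p.2 * N + p.1)]| = count P (iota 0 (s * N)).
Proof.
rewrite -sum1_card -sum1_count.
rewrite (eq_bigl (fun p : 'I_N * 'I_s => P (p.2 * N + p.1))) => [|p]; last by rewrite inE.
rewrite -(pair_big_dep xpredT (fun (d : 'I_N) (k : 'I_s) => P (k * N + d)) (fun _ _ => 1)).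
rewrite (exchange_big_dep xpredT) //=.
have -> : iota 0 (s * N) = index_iota 0 (s * N) by rewrite /index_iota subn0.
rewrite [RHS]big_mkcond big_nat_mul [RHS]big_mkord.
apply: eq_bigr => k _; rewrite -[k * N]add0n big_addn mulSn addnK big_mkord big_mkcond.
by apply: eq_bigr => d _; rewrite addnC.
Qed.

Lemma sum_window_le_zsum (x : nat -> nat) delta beta t' t :
  0 < t' -> t < t' + (delta + beta) ->
  \sum_(t' <= tau < t.+1) x tau <= zsum x delta beta t.
Proof.
move=> t'_gt0 t_near.
rewrite /zsum (@big_nat_widenl _ _ _ t' (t.+1 - (delta + beta))); last by lia.
rewrite [X in X <= _]big_mkcond [X in _ <= X]big_mkcond; apply: leq_sum => i _.
by case: ifP => /= [le_t'i|//]; rewrite (leq_trans t'_gt0 le_t'i).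
Qed.

Section ShiftOrder.

Variable x : nat -> nat.

Definition cumul t := \sum_(1 <= tau < t.+1) x tau.

Lemma cumul0 : cumul 0 = 0.
Proof. by rewrite /cumul big_geq. Qed.

Lemma cumulS t : cumul t.+1 = cumul t + x t.+1.
Proof. by rewrite /cumul big_nat_recr. Qed.

Lemma cumul_split t' t : 0 < t' <= t.+1 ->
  cumul t'.-1 + \sum_(t' <= tau < t.+1) x tau = cumul t.
Proof. by case/andP=> t'_gt0 le_t't; rewrite /cumul prednK // -big_cat_nat. Qed.

Lemma leq_cumul : {homo cumul : m n / m <= n}.
Proof.
by move=> m n le_mn; rewrite -(@cumul_split m.+1 n) ?ltnS //= leq_addr.
Qed.

Variable T : nat.

(* Shift number [i] (0-based, in order of start time) starts at the first [t] by which
   more than [i] shifts have started. *)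
Definition start i := find (fun t => i < cumul t) (iota 0 T.+1).

Section StartOfShift.

Variable i : nat.
Hypothesis i_lt : i < cumul T.

Lemma startP :
  [/\ start i <= T, i < cumul (start i) & forall t, t < start i -> cumul t <= i].
Proof.
have has_t : has (fun t => i < cumul t) (iota 0 T.+1).
  by apply/hasP; exists T; rewrite ?mem_iota ?leq0n ?ltnSn.
have lt_start : start i < T.+1 by move: has_t; rewrite has_find size_iota.
split=> //; first by have := nth_find 0 has_t; rewrite nth_iota.
move=> t lt_t; have := before_find 0 lt_t.
by rewrite nth_iota ?add0n ?(ltn_trans lt_t) // => /negbT; rewrite -leqNgt.
Qed.

Lemma start_gt0 : 0 < start i.
Proof. by have [_ + _] := startP; case: (start i) => //; rewrite cumul0. Qed.

Lemma start_eq t : 0 < t <= T -> (start i == t) = (cumul t.-1 <= i < cumul t).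
Proof.
move=> /andP[t_gt0 _]; have [_ i_lt_start before_start] := startP.
apply/eqP/andP => [<-|[le_i lt_i]].
  split; [apply: before_start; rewrite ltn_predL; exact: start_gt0 | exact: i_lt_start].
apply/eqP; rewrite eqn_leq; apply/andP; split; rewrite leqNgt; apply/negP => lt_t.
  by have := before_start _ lt_t; rewrite leqNgt lt_i.
have : cumul (start i) <= cumul t.-1 by apply: leq_cumul; lia.
lia.
Qed.

End StartOfShift.

Lemma leq_start i j : i <= j -> j < cumul T -> start i <= start j.
Proof.
move=> le_ij j_lt; have i_lt : i < cumul T by lia.
have [_ _ before_i] := startP i_lt; have [_ j_lt_start _] := startP j_lt.
by rewrite leqNgt; apply/negP => /before_i; lia.
Qed.

Lemma start_sep N delta beta :
  (forall t, 0 < t <= T -> zsum x delta beta t <= N) ->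
  forall i j, i + N <= j -> j < cumul T -> start i + delta + beta <= start j.
Proof.
move=> hz i j le_iNj j_lt; have i_lt : i < cumul T by lia.
have [_ _ before_i] := startP i_lt; have [le_start_j j_lt_start _] := startP j_lt.
have start_i_gt0 := start_gt0 i_lt.
have le_start_ij : start i <= start j by apply: leq_start; lia.
rewrite leqNgt; apply/negP => near.
have few : \sum_(start i <= tau < (start j).+1) x tau <= N.
  apply: leq_trans (hz (start j) _); last by lia.
  by apply: sum_window_le_zsum; lia.
have many : cumul (start i).-1 + \sum_(start i <= tau < (start j).+1) x tau
            = cumul (start j) by apply: cumul_split; lia.
have := before_i (start i).-1 ltac:(by rewrite ltn_predL).
lia.
Qed.

End ShiftOrder.

Theorem lemma1 (T N s delta beta : nat) (x : nat -> nat)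
  (hT : 0 < T) (hN : 0 < N) (hs : 0 < s) (hdelta : 0 < delta)
  (hsum : \sum_(1 <= t < T.+1) x t = s * N)
  (hz : forall t, 1 <= t <= T -> zsum x delta beta t <= N) :
  exists f : 'I_N -> 'I_s -> nat,
    realizes T x f /\ adequate_breaks delta beta f.
Proof.
have cumulT : cumul x T = s * N by [].
have index_lt (d : 'I_N) (k : 'I_s) : k * N + d < cumul x T.
  by rewrite cumulT; have := ltn_ord d; have := ltn_ord k; nia.
exists (fun d k => start x T (k * N + d)); split; last first.
  move=> d k1 k2 neq_k.
  have sep (k k' : 'I_s) :
      k < k' -> start x T (k * N + d) + delta + beta <= start x T (k' * N + d).
    by move=> lt_k; apply: (start_sep hz); [nia | exact: index_lt].
  case: (ltngtP k1 k2) => [/sep -> | /sep -> | eq_k]; rewrite ?orbT //.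
  by rewrite -val_eqE /= eq_k eqxx in neq_k.
split=> [d k | t t_range].
  have [le_T _ _] := startP (index_lt d k).
  by rewrite le_T andbT; apply: start_gt0; exact: index_lt.
rewrite (@card_ord_pair_index N s (fun i => start x T i == t)) -cumulT.
rewrite (@eq_in_count _ _ (fun i => cumul x t.-1 <= i < cumul x t)); last first.
  by move=> i; rewrite mem_iota add0n => /andP[_ i_lt]; rewrite start_eq.
rewrite count_range_iota (minn_idPl (leq_cumul x _)); last by case/andP: t_range.
by case: t t_range => // t _; rewrite cumulS addKn.
Qed.
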